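(* Let $X$ be a finite set with $|X|=n>1$ and let $G$ be the undirected graph whose vertices are the weak orders on $X$, with $W,W'$ adjacent iff one covers the other in the poset $(\mathbf{WO},\subseteq)$. Then for all weak orders $W,W'$, the shortest-path distance in $G$ between $W$ and $W'$ equals $|J_W\,\Delta\,J_{W'}|$. Consequently $W\mapsto \chi(J_W)\in\{0,1\}^{\mathbf{WO}(2)}$ is an isometric embedding of $G$ into the hypercube graph of dimension $2^n-2$, i.e. $G$ is a partial cube. Equivalently, the family $\mathcal{J}$ is well graded: for any $A,B\in\mathcal{J}$ there is a sequence $A=A_0,A_1,\ldots,A_k=B$ in $\mathcal{J}$ with $k=|A\Delta B|$ and $|A_i\Delta A_{i+1}|=1$ for all $i$.
   Context: A weak order on $X$ is a transitive, strongly complete binary relation on $X$. $\mathbf{WO}(2)$ is the set of weak orders with exactly two indifference classes ($|\mathbf{WO}(2)|=2^n-2$), $J_W=\{U\in\mathbf{WO}(2): W\subseteq U\}$, $\mathcal{J}=\{J_W\}$, and $\chi(J)$ denotes the characteristic vector of $J\subseteq\mathbf{WO}(2)$. $W'$ covers $W$ means $W\subsetneq W'$ with no weak order strictly between them. *)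

From mathcomp Require Import all_boot.
Set Implicit Arguments. Unset Strict Implicit. Unset Printing Implicit Defensive.

(* Binary relations on a finite set X are represented as {set X * X}:
   (x, y) \in W means  x W y. *)
Section WeakOrders.
Variable X : finType.
Definition rel_of := {set X * X}.

Definition transitiveR (W : rel_of) : bool :=
  [forall x, forall y, forall z, ((x, y) \in W) && ((y, z) \in W) ==> ((x, z) \in W)].
Definition strongly_complete (W : rel_of) : bool :=
  [forall x, forall y, ((x, y) \in W) || ((y, x) \in W)].
Definition weak_order (W : rel_of) : bool := transitiveR W && strongly_complete W.

Definition indiff_class (W : rel_of) (x : X) : {set X} :=
  [set y | ((x, y) \in W) && ((y, x) \in W)].
Definition indiff_classes (W : rel_of) : {set {set X}} :=
  [set indiff_class W x | x : X].

Definition WO2 (U : rel_of) : bool := weak_order U && (#|indiff_classes U| == 2).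

Definition J (W : rel_of) : {set rel_of} := [set U | WO2 U & W \subset U].

Definition symdiff (T : finType) (A B : {set T}) : {set T} := (A :\: B) :|: (B :\: A).

Definition covers (W W' : rel_of) : bool :=
  (W \proper W') && [forall U, ~~ [&& weak_order U, W \proper U & U \proper W']].

Definition adjWO (W W' : rel_of) : bool :=
  [&& weak_order W, weak_order W' & covers W W' || covers W' W].

(* a walk of length (size p) in the graph G from W to W' *)
Definition walk (W W' : rel_of) (p : seq rel_of) : bool :=
  weak_order W && path adjWO W p && (last W p == W').

Definition graph_dist (W W' : rel_of) (d : nat) : Prop :=
  (exists2 p, walk W W' p & size p = d) /\
  (forall p, walk W W' p -> d <= size p).
End WeakOrders.

From mathcomp Require Import all_boot.
Set Implicit Arguments. Unset Strict Implicit. Unset Printing Implicit Defensive.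

(* A two-class weak order is determined by its top class, and for U in J W the
   top class of U is an up-set of W; since W is total these up-sets form a chain.
   A chain of sets separates a set D (every x in D is split from every z outside D
   by a member of the chain) only if D belongs to it; this shows that every
   subfamily S of J W equals J of the weak order given by the intersection of S.
   So J reverses inclusion and each subfamily of J W is realized: W' covers W
   exactly when J W is J W' plus one element.  Hence every edge changes J by one
   element, and conversely one can delete the elements of J W \ J W' and then
   add those of J W' \ J W one at a time, which gives a path whose length is the
   size of the symmetric difference of J W and J W'. *)

Section SubsetChains.
Variable T : finType.
Implicit Types (A B D : {set T}) (F : {set {set T}}).

Definition subset_chain F := {in F &, forall A B, (A \subset B) || (B \subset A)}.

Lemma subset_chain_sub F F' : subset_chain F -> F' \subset F -> subset_chain F'.
Proof. by move=> chF /subsetP sF'F A B /sF'F FA /sF'F FB; apply: chF. Qed.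

Lemma subset_chain_card F A B : subset_chain F -> A \in F -> B \in F ->
  #|A| <= #|B| -> A \subset B.
Proof.
move=> chF FA FB leAB; apply/idPn => nsAB.
have ltBA : B \proper A.
  by rewrite properE nsAB andbT; case/orP: (chF A B FA FB) => // sAB; rewrite sAB in nsAB.
by move: (proper_card ltBA); rewrite ltnNge leAB.
Qed.

Lemma subset_chain_bigcup F A0 : subset_chain F -> A0 \in F -> \bigcup_(A in F) A \in F.
Proof.
move=> chF FA0; have [B FB maxB] := arg_maxnP (fun A : {set T} => #|A|) FA0.
suff -> : \bigcup_(A in F) A = B by [].
apply/eqP; rewrite eqEsubset (bigcup_sup _ FB) andbT.
by apply/bigcupsP => A FA; apply: subset_chain_card chF FA FB (maxB A FA).
Qed.

Lemma subset_chain_bigcap F A0 : subset_chain F -> A0 \in F -> \bigcap_(A in F) A \in F.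
Proof.
move=> chF FA0; have [B FB minB] := arg_minnP (fun A : {set T} => #|A|) FA0.
suff -> : \bigcap_(A in F) A = B by [].
apply/eqP; rewrite eqEsubset (bigcap_inf _ FB) /=.
by apply/bigcapsP => A FA; apply: subset_chain_card chF FB FA (minB A FA).
Qed.

(* [D] is the intersection over [z \notin D] of the largest member of [F] avoiding [z]. *)
Lemma subset_chain_separated F D x0 z0 : subset_chain F -> x0 \in D -> z0 \notin D ->
  (forall x z, x \in D -> z \notin D ->
     exists2 B, B \in F & (x \in B) && (z \notin B)) ->
  D \in F.
Proof.
move=> chF Dx0 Dz0 sepF.
pose avoid z := [set B in F | z \notin B].
pose top_avoid z := \bigcup_(B in avoid z) B.
have avoidF z : avoid z \subset F by apply/subsetP => B; rewrite inE => /andP [].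
have top_avoidP z : z \notin D -> top_avoid z \in avoid z /\ D \subset top_avoid z.
  move=> Dz; split.
    have [B FB /andP [_ zB]] := sepF x0 z Dx0 Dz.
    have chz := subset_chain_sub chF (avoidF z).
    by apply: (subset_chain_bigcup (A0 := B) chz); rewrite inE FB.
  apply/subsetP => x Dx; have [B FB /andP [xB zB]] := sepF x z Dx Dz.
  by apply: subsetP xB; apply: bigcup_sup; rewrite inE FB.
pose H := [set top_avoid z | z in ~: D].
have HF : H \subset F.
  apply/subsetP => _ /imsetP [z Dz ->]; rewrite inE in Dz.
  by have [/(subsetP (avoidF z))] := top_avoidP z Dz.
suff -> : D = \bigcap_(B in H) B.
  apply: (subsetP HF); have chH := subset_chain_sub chF HF.
  by apply: (subset_chain_bigcap (A0 := top_avoid z0) chH); apply: imset_f; rewrite inE.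
apply/eqP; rewrite eqEsubset; apply/andP; split.
  by apply/bigcapsP => _ /imsetP [z Dz ->]; rewrite inE in Dz; case: (top_avoidP z Dz).
apply/subsetP => y /bigcapP Hy; apply/idPn => Dy.
have [] := top_avoidP y Dy; rewrite inE => /andP [_ /negP yN] _; apply: yN.
by apply: Hy; apply: imset_f; rewrite inE.
Qed.

End SubsetChains.

Section SymmetricDifference.
Variable T : finType.
Implicit Types (A B C : {set T}) (x : T).

Lemma in_symdiff A B x : (x \in symdiff A B) = (x \in A) (+) (x \in B).
Proof. by rewrite !inE; case: (x \in A); case: (x \in B). Qed.

Lemma symdiffC A B : symdiff A B = symdiff B A.
Proof. by rewrite /symdiff setUC. Qed.

Lemma symdiff_eq0 A B : (symdiff A B == set0) = (A == B).
Proof.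
apply/eqP/eqP => [sd0|->]; apply/setP => x.
  by move/setP/(_ x): sd0; rewrite in_symdiff inE; case: (x \in A); case: (x \in B).
by rewrite in_symdiff addbb inE.
Qed.

Lemma symdiff_setU1 B x : x \notin B -> symdiff (x |: B) B = [set x].
Proof.
move=> Bx; apply/setP => y; rewrite in_symdiff !inE.
by case: eqP => [->|]; rewrite ?(negbTE Bx) //= addbb.
Qed.

Lemma card_symdiff_triangle A B C :
  #|symdiff A C| <= #|symdiff A B| + #|symdiff B C|.
Proof.
apply: leq_trans (leq_card_setU _ _); apply: subset_leq_card.
apply/subsetP => x; rewrite in_setU !in_symdiff.
by case: (x \in A); case: (x \in B); case: (x \in C).
Qed.

Lemma card_symdiff_toggle A A' B x : x \in symdiff A B -> symdiff A A' = [set x] ->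
  #|symdiff A B| = #|symdiff A' B|.+1.
Proof.
move=> sdx sdA'; rewrite (cardsD1 x) sdx add1n; congr _.+1.
apply: eq_card => y; move/setP/(_ y): sdA'; rewrite in_setD1 !in_symdiff inE.
case: eqP => [-> sdA'x|_]; last by case: (y \in A); case: (y \in A').
move: sdx sdA'x; rewrite in_symdiff.
by case: (x \in A); case: (x \in A'); case: (x \in B).
Qed.

End SymmetricDifference.

Section WeakOrders.
Variable X : finType.
Implicit Types (W U V C M : {set X * X}) (A : {set X}) (S : {set {set X * X}}).

Lemma weak_order_trans W x y z :
  weak_order W -> (x, y) \in W -> (y, z) \in W -> (x, z) \in W.
Proof.
case/andP => /forallP /(_ x) /forallP /(_ y) /forallP /(_ z) /implyP trW _ xy yz.
by apply: trW; rewrite xy yz.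
Qed.

Lemma weak_order_total W x y : weak_order W -> ((x, y) \in W) || ((y, x) \in W).
Proof. by case/andP => _ /forallP /(_ x) /forallP /(_ y). Qed.

Lemma weak_order_refl W x : weak_order W -> (x, x) \in W.
Proof. by move=> woW; have := weak_order_total x x woW; rewrite orbb. Qed.

Lemma weak_orderI W :
  (forall x y z, (x, y) \in W -> (y, z) \in W -> (x, z) \in W) ->
  (forall x y, ((x, y) \in W) || ((y, x) \in W)) -> weak_order W.
Proof.
move=> trW totW; apply/andP; split; last first.
  by apply/forallP => x; apply/forallP => y; apply: totW.
apply/forallP => x; apply/forallP => y; apply/forallP => z; apply/implyP.
by case/andP; apply: trW.
Qed.

Lemma weak_order_notin W x y : weak_order W -> (x, y) \notin W -> (y, x) \in W.
Proof. by move=> woW; have := weak_order_total x y woW; case: ((x, y) \in W). Qed.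

(* The weak order with the two indifference classes [A] (on top) and [~: A]. *)
Definition cut_rel A : {set X * X} := [set p | (p.1 \in A) || (p.2 \notin A)].

Definition top_set U : {set X} := [set x | [forall y, (x, y) \in U]].

Lemma cut_rel_WO2 A a b : a \in A -> b \notin A -> WO2 (cut_rel A).
Proof.
move=> Aa Ab; apply/andP; split.
  apply: weak_orderI => [x y z|x y]; rewrite !inE /=.
    by case: (x \in A); case: (y \in A); case: (z \in A).
  by case: (x \in A); case: (y \in A).
have classE x : indiff_class (cut_rel A) x = if x \in A then A else ~: A.
  by apply/setP => y; case Ax: (x \in A); rewrite !inE /= Ax /=; case: (y \in A).
have -> : indiff_classes (cut_rel A) = [set A; ~: A].
  apply/setP => B; rewrite !inE; apply/imsetP/orP => [[x _ ->]|[] /eqP ->].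
  - by rewrite classE; case: (x \in A); [left|right].
  - by exists a; rewrite // classE Aa.
  - by exists b; rewrite // classE (negbTE Ab).
rewrite cards2; suff -> : A != ~: A by [].
by apply/eqP => AE; move: (Aa); rewrite {1}AE inE Aa.
Qed.

Lemma weak_order_three_classes U a b c : weak_order U ->
  (a, b) \notin U -> (b, c) \notin U -> 2 < #|indiff_classes U|.
Proof.
move=> woU Uab Ubc.
have Uac : (a, c) \notin U.
  apply: contra Uab => Uac.
  exact: weak_order_trans woU Uac (weak_order_notin woU Ubc).
have classN x y : (x, y) \notin U -> indiff_class U x != indiff_class U y.
  move=> Uxy; apply: contraNneq Uxy => /setP /(_ y).
  by rewrite !inE !(weak_order_refl _ woU) => /andP [].
set ca := indiff_class U a; set cb := indiff_class U b; set cc := indiff_class U c.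
have sub : ca |: [set cb; cc] \subset indiff_classes U.
  by apply/subsetP => B; rewrite !inE => /or3P [] /eqP ->; apply: imset_f.
apply: leq_trans (subset_leq_card sub).
by rewrite cardsU1 cards2 !inE negb_or !classN.
Qed.

Lemma WO2_weak_order U : WO2 U -> weak_order U.
Proof. by case/andP. Qed.

Lemma WO2_exists_notin U : WO2 U -> exists a b, (a, b) \notin U.
Proof.
case/andP => _ /eqP two.
have [[a b] Uab|full] := pickP [pred p | p \notin U]; first by exists a, b.
have : indiff_classes U \subset [set setT].
  apply/subsetP => _ /imsetP [x _ ->]; rewrite inE; apply/eqP/setP => y.
  by rewrite !inE; move: (full (x, y)) (full (y, x)) => /= /negbFE -> /negbFE ->.
by move/subset_leq_card; rewrite cards1 two.
Qed.

Lemma WO2_top U a b : WO2 U -> (a, b) \notin U -> b \in top_set U.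
Proof.
case/andP => woU /eqP two Uab; rewrite inE; apply/forallP => c; apply/idPn => Ubc.
by have := weak_order_three_classes woU Uab Ubc; rewrite two.
Qed.

Lemma WO2_cut_rel U : WO2 U -> U = cut_rel (top_set U).
Proof.
move=> U2; have woU := WO2_weak_order U2.
apply/setP => -[x y]; rewrite inE /=; apply/idP/idP => [Uxy|].
  case topy: (y \in top_set U); last by rewrite orbT.
  rewrite orbF inE; apply/forallP => z; apply: weak_order_trans woU Uxy _.
  by move: topy; rewrite inE => /forallP.
case/orP => [|topNy]; first by rewrite inE => /forallP.
by apply/idPn => Uxy; rewrite (WO2_top U2 Uxy) in topNy.
Qed.

Lemma WO2_notin U x z : WO2 U ->
  ((z, x) \notin U) = (x \in top_set U) && (z \notin top_set U).
Proof. by move=> U2; rewrite {1}(WO2_cut_rel U2) inE negb_or negbK andbC. Qed.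

Lemma J_anti U V : U \subset V -> J V \subset J U.
Proof.
move=> sUV; apply/subsetP => C; rewrite !inE => /andP [-> sVC] /=.
exact: subset_trans sUV sVC.
Qed.

Lemma top_set_J W U a b : U \in J W -> (a, b) \in W -> b \in top_set U -> a \in top_set U.
Proof.
rewrite !inE => /andP [/WO2_weak_order woU /subsetP sWU] Wab /forallP topb.
by apply/forallP => y; apply: weak_order_trans woU (sWU _ Wab) (topb y).
Qed.

Lemma top_set_J_chain W : weak_order W -> subset_chain (top_set @: J W).
Proof.
move=> woW _ _ /imsetP [A JA ->] /imsetP [B JB ->].
apply/idPn; rewrite negb_or => /andP [/subsetPn [a Aa Ba] /subsetPn [b Bb Ab]].
case/orP: (weak_order_total a b woW) => [Wab|Wba].
  by rewrite (top_set_J JB Wab Bb) in Ba.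
by rewrite (top_set_J JA Wba Aa) in Ab.
Qed.

Lemma weak_order_bigcap W S : weak_order W -> S \subset J W ->
  weak_order (\bigcap_(U in S) U).
Proof.
move=> woW /subsetP sSJ.
have woS U : U \in S -> weak_order U.
  by move=> /sSJ; rewrite inE => /andP [/WO2_weak_order].
have WS a b : (a, b) \in W -> (a, b) \in \bigcap_(U in S) U.
  by move=> Wab; apply/bigcapP => U /sSJ; rewrite inE => /andP [_ /subsetP]; apply.
apply: weak_orderI => [x y z /bigcapP Sxy /bigcapP Syz|x y].
  by apply/bigcapP => U SU; apply: weak_order_trans (woS U SU) (Sxy U SU) (Syz U SU).
by case/orP: (weak_order_total x y woW) => /WS ->; rewrite ?orbT.
Qed.

Lemma bigcap_J W : weak_order W -> \bigcap_(U in J W) U = W.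
Proof.
move=> woW; apply/eqP; rewrite eqEsubset; apply/andP; split; last first.
  by apply/bigcapsP => U; rewrite inE => /andP [].
apply/subsetP => -[x y] /bigcapP JWxy; apply/idPn => Wxy.
pose A := [set z | (x, z) \notin W].
have JA : cut_rel A \in J W.
  rewrite inE (@cut_rel_WO2 A y x) ?inE ?Wxy ?weak_order_refl //=.
  apply/subsetP => -[a b] Wab; rewrite !inE /= negbK -implybE.
  by apply/implyP => Wxa; apply: weak_order_trans woW Wxa Wab.
by move: (JWxy _ JA); rewrite !inE /= Wxy weak_order_refl.
Qed.

Lemma J_bigcap W S : weak_order W -> S \subset J W -> J (\bigcap_(U in S) U) = S.
Proof.
move=> woW sSJ; have S2 U : U \in S -> WO2 U.
  by move=> SU; move: (subsetP sSJ _ SU); rewrite inE => /andP [].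
apply/setP => C; apply/idP/idP => [|SC]; last by rewrite inE S2 //= bigcap_inf.
rewrite inE => /andP [C2 sSC].
have [a [b Cab]] := WO2_exists_notin C2.
have chS : subset_chain (top_set @: S).
  exact: subset_chain_sub (top_set_J_chain woW) (imsetS _ sSJ).
have : top_set C \in top_set @: S.
  move: Cab; rewrite (WO2_notin _ _ C2) => /andP [topb topNa].
  apply: (subset_chain_separated chS topb topNa) => x z topx topNz.
  have [U SU Uzx] : exists2 U, U \in S & (z, x) \notin U.
    apply/exists_inP; apply: contraT => /exists_inPn nS.
    have Czx : (z, x) \in C.
      by apply: (subsetP sSC); apply/bigcapP => U SU; apply: negbNE (nS U SU).
    by have := WO2_notin x z C2; rewrite Czx topx topNz.
  by exists (top_set U); [apply: imset_f | rewrite -WO2_notin ?S2].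
case/imsetP => U SU topCU.
by rewrite (WO2_cut_rel C2) topCU -WO2_cut_rel ?S2.
Qed.

Lemma J_realized W S : weak_order W -> S \subset J W ->
  exists2 V, weak_order V & J V = S.
Proof.
move=> woW sSJ; exists (\bigcap_(U in S) U); first exact: weak_order_bigcap woW sSJ.
exact: J_bigcap woW sSJ.
Qed.

Lemma J_subset U V : weak_order U -> weak_order V -> (J V \subset J U) = (U \subset V).
Proof.
move=> woU woV; apply/idP/idP; last exact: J_anti.
move=> sJ; rewrite -(bigcap_J woU) -(bigcap_J woV).
by apply/bigcapsP => C JVC; apply: bigcap_inf; apply: (subsetP sJ).
Qed.

Lemma J_inj U V : weak_order U -> weak_order V -> J U = J V -> U = V.
Proof.
move=> woU woV JUV; apply/eqP; rewrite eqEsubset -J_subset // -J_subset //.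
by rewrite JUV subxx.
Qed.

Lemma J_proper U V : weak_order U -> weak_order V -> (J V \proper J U) = (U \proper V).
Proof. by move=> woU woV; rewrite !properE !J_subset. Qed.

Lemma covers_J U V : weak_order U -> weak_order V ->
  reflect (exists2 C, C \notin J V & J U = C |: J V) (covers U V).
Proof.
move=> woU woV.
have ltJ C : C \notin J V -> J V \proper C |: J V.
  by move=> JVC; rewrite -{1}(setU1K JVC) properD1 ?setU11.
apply: (iffP andP) => [[ltUV /forallP noMid]|[C JVC JUE]].
  have /properP [_ [C JUC JVC]] : J V \proper J U by rewrite J_proper.
  have sSJ : C |: J V \subset J U.
    by rewrite subUset sub1set JUC proper_sub // J_proper.
  have [M woM JM] := J_realized woU sSJ.
  have ltMV : M \proper V by rewrite -J_proper // JM ltJ.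
  move: (noMid M); rewrite woM ltMV andbT /= properE -J_subset // JM sSJ /= negbK.
  rewrite -J_subset // JM => sJ; exists C => //.
  by apply/eqP; rewrite eqEsubset sJ sSJ.
split; first by rewrite -J_proper // JUE ltJ.
apply/forallP => M; apply/and3P => -[woM]; rewrite -!J_proper // JUE => ltMU ltVM.
case JMC: (C \in J M).
  by move: ltMU; rewrite properE subUset sub1set JMC (proper_sub ltVM) andbF.
move: ltVM; rewrite properE => /andP [_ /negP]; apply.
apply/subsetP => D JMD; move: (subsetP (proper_sub ltMU) D JMD).
by rewrite in_setU1 => /orP [/eqP DC|//]; rewrite DC JMC in JMD.
Qed.

Lemma adjWO_symdiff U V : adjWO U V -> #|symdiff (J U) (J V)| = 1.
Proof.
case/and3P => woU woV /orP [/(covers_J woU woV)|/(covers_J woV woU)] [C JC ->].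
  by rewrite symdiff_setU1 ?cards1.
by rewrite symdiffC symdiff_setU1 ?cards1.
Qed.

Lemma path_adjWO_weak_order W p : path (@adjWO X) W p -> all (@weak_order X) p.
Proof. by elim: p W => //= V p IHp W /andP [/and3P [_ -> _] /IHp]. Qed.

Lemma path_adjWO_symdiff W p :
  path (@adjWO X) W p -> #|symdiff (J W) (J (last W p))| <= size p.
Proof.
elim: p W => [W _|V p IHp W /= /andP [adjWV /IHp le_p]].
  by rewrite leqn0 cards_eq0 symdiff_eq0.
apply: leq_trans (card_symdiff_triangle _ (J V) _) _.
by rewrite adjWO_symdiff // add1n ltnS.
Qed.

Lemma adjWO_step W W' : weak_order W -> weak_order W' -> J W != J W' ->
  exists2 W1, adjWO W W1 & #|symdiff (J W) (J W')| = #|symdiff (J W1) (J W')|.+1.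
Proof.
move=> woW woW' neJ; have [sJ|/subsetPn [C JWC JW'C]] := boolP (J W \subset J W').
  have /properP [_ [C JW'C JWC]] : J W \proper J W' by rewrite properEneq neJ.
  have sSJ : C |: J W \subset J W' by rewrite subUset sub1set JW'C.
  have [W1 woW1 JW1] := J_realized woW' sSJ.
  exists W1.
    by rewrite /adjWO woW woW1 /=; apply/orP; right; apply/covers_J => //; exists C.
  apply: (card_symdiff_toggle (x := C)); first by rewrite in_symdiff (negbTE JWC) JW'C.
  by rewrite JW1 symdiffC symdiff_setU1.
have [W1 woW1 JW1] := J_realized woW (subsetDl (J W) [set C]).
exists W1.
  rewrite /adjWO woW woW1 /=; apply/orP; left; apply/covers_J => //.
  by exists C; rewrite JW1 ?setD11 ?setD1K.
apply: (card_symdiff_toggle (x := C)); first by rewrite in_symdiff JWC (negbTE JW'C).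
by rewrite JW1 -{1}(setD1K JWC) symdiff_setU1 // setD11.
Qed.

Lemma adjWO_geodesic W W' : weak_order W -> weak_order W' ->
  exists p, [/\ path (@adjWO X) W p, last W p = W' & size p = #|symdiff (J W) (J W')|].
Proof.
move=> woW woW'; move dE: #|symdiff (J W) (J W')| => d.
elim: d W woW dE => [|d IHd] W woW dE.
  exists [::]; split=> //=; apply: J_inj woW woW' _.
  by apply/eqP; rewrite -symdiff_eq0 -cards_eq0 dE.
have neJ : J W != J W' by rewrite -symdiff_eq0 -cards_eq0 dE.
have [W1 adjWW1 dE1] := adjWO_step woW woW' neJ.
have /and3P [_ woW1 _] := adjWW1.
have [|p [pathp lastp sizep]] := IHd W1 woW1; first by apply: succn_inj; rewrite -dE1.
by exists (W1 :: p); split; rewrite //= ?adjWW1 ?sizep.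
Qed.

End WeakOrders.

Theorem mainTheorem7 (X : finType) (n : nat) :
  #|X| = n -> 1 < n ->
  (forall W W' : {set X * X}, weak_order W -> weak_order W' ->
     graph_dist W W' #|symdiff (J W) (J W')|)
  /\
  (forall W W' : {set X * X}, weak_order W -> weak_order W' ->
     exists s : seq {set X * X},
       [/\ all (@weak_order X) s,
           size s = #|symdiff (J W) (J W')|,
           J (last W s) = J W' &
           path (fun U V => #|symdiff (J U) (J V)| == 1) W s]).
Proof.
(* The distance formula holds for every finite [X]. *)
move=> _ _; split=> W W' woW woW';
  have [p [pathp lastp sizep]] := adjWO_geodesic woW woW'.
- split; first by exists p; rewrite // /walk woW pathp lastp eqxx.
  by move=> q /andP [/andP [_ pathq] /eqP <-]; apply: path_adjWO_symdiff.
- exists p; split; rewrite ?lastp //; first exact: path_adjWO_weak_order pathp.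
  by apply: sub_path pathp => U V /adjWO_symdiff ->.
Qed.
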